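(* Let $\Lambda_1$ be a finite irreducible graph with at least two vertices, and let $\Lambda_2$ and $\Gamma$ be finite simple graphs. Suppose that (1) there is an injective homomorphism $\psi\colon A(\Lambda_1*\Lambda_2)\hookrightarrow A(\Gamma)$ satisfying condition (KK), and (2) for $i=1,2$ there are full embeddings $\iota_i\colon\Lambda_i\to\Gamma$ with $\iota_i(V(\Lambda_i))\subset\mathrm{supp}(\psi_i)$, where $\psi_i$ is the restriction of $\psi$ to $A(\Lambda_i)$. Then the map $\iota\colon\Lambda_1*\Lambda_2\to\Gamma$ defined by $\iota(v)=\iota_1(v)$ for $v\in V(\Lambda_1)$ and $\iota(v)=\iota_2(v)$ for $v\in V(\Lambda_2)$ is a full embedding with $\iota(V(\Lambda_1*\Lambda_2))\subset\mathrm{supp}(\psi)$.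
   Context: All graphs are simple. $A(\Gamma) = \langle V(\Gamma) \mid uv=vu \text{ whenever } \{u,v\}\in E(\Gamma)\rangle$ is the right-angled Artin group. A graph embedding is an injective vertex map preserving adjacency; it is full if it also preserves non-adjacency. The join $\Lambda_1*\Lambda_2$ is obtained from the disjoint union by joining every vertex of $\Lambda_1$ to every vertex of $\Lambda_2$; $A(\Lambda_1*\Lambda_2)=A(\Lambda_1)\times A(\Lambda_2)$. A graph is irreducible if it is not the join of two non-empty graphs. The support $\mathrm{supp}(g)$ of $g\in A(\Gamma)$ is the set of vertices $v$ such that $v$ or $v^{-1}$ occurs in a (equivalently, any) shortest word representing $g$. For a homomorphism $\psi\colon A(\Lambda)\to A(\Gamma)$, $\mathrm{supp}(\psi)=\bigcup_{v\in V(\Lambda)}\mathrm{supp}(\psi(v))$. A homomorphism $\psi$ satisfies condition (KK) if for every $v\in V(\Lambda)$ the set $\mathrm{supp}(\psi(v))$ consists of mutually adjacent vertices of $\Gamma$. *)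

From mathcomp Require Import all_boot.
Set Implicit Arguments. Unset Strict Implicit. Unset Printing Implicit Defensive.

Definition simple_graph (V : finType) (e : rel V) : Prop :=
  symmetric e /\ irreflexive e.

Definition joinrel (V1 V2 : finType) (e1 : rel V1) (e2 : rel V2) : rel (V1 + V2) :=
  fun x y => match x, y with
  | inl a, inl b => e1 a b
  | inr a, inr b => e2 a b
  | _, _ => true
  end.

(* Irreducible: not the join of two non-empty graphs, i.e. there is no
   partition of the vertex set into two non-empty parts A, V\A with every
   vertex of A adjacent to every vertex of V\A. *)
Definition irreducible_graph (V : finType) (e : rel V) : Prop :=
  ~ exists A : {set V}, [/\ A != set0, ~: A != set0 &
      forall a b, a \in A -> b \notin A -> e a b].

Definition full_embedding (V W : finType) (e : rel V) (f : rel W) (i : V -> W) : Prop :=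
  injective i /\ forall u v, f (i u) (i v) = e u v.

(* Words in the generators of A(Gamma): letters (v, true) = v, (v, false) = v^-1. *)
Definition word (V : Type) := seq (V * bool).

(* The congruence on words defining A(Gamma) = <V | uv = vu for {u,v} in E>. *)
Inductive raag_eq (V : finType) (e : rel V) : word V -> word V -> Prop :=
| re_refl w : raag_eq e w w
| re_sym w1 w2 : raag_eq e w1 w2 -> raag_eq e w2 w1
| re_trans w1 w2 w3 : raag_eq e w1 w2 -> raag_eq e w2 w3 -> raag_eq e w1 w3
| re_cat w1 w2 w1' w2' : raag_eq e w1 w1' -> raag_eq e w2 w2' ->
    raag_eq e (w1 ++ w2) (w1' ++ w2')
| re_free x b : raag_eq e [:: (x, b); (x, ~~ b)] [::]
| re_comm u v : e u v -> raag_eq e [:: (u, true); (v, true)] [:: (v, true); (u, true)].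

Definition winv (V : Type) (w : word V) : word V :=
  rev (map (fun p => (p.1, ~~ p.2)) w).

Definition wsubst (V W : Type) (f : V -> word W) (w : word V) : word W :=
  flatten (map (fun p => if p.2 then f p.1 else winv (f p.1)) w).

(* f : V(Lambda) -> A(Gamma) (given by representative words) induces a
   homomorphism A(Lambda) -> A(Gamma). *)
Definition raag_hom (V W : finType) (e : rel V) (g : rel W) (f : V -> word W) : Prop :=
  forall u v, e u v ->
    raag_eq g (f u ++ f v) (f v ++ f u).

Definition raag_hom_inj (V W : finType) (e : rel V) (g : rel W) (f : V -> word W) : Prop :=
  forall w1 w2 : word V, raag_eq g (wsubst f w1) (wsubst f w2) -> raag_eq e w1 w2.

Definition supp (W : finType) (g : rel W) (w : word W) (v : W) : Prop :=
  exists w', [/\ raag_eq g w w',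
     (forall w'', raag_eq g w w'' -> size w' <= size w'') &
     v \in map fst w'].

Definition KK (V W : finType) (g : rel W) (f : V -> word W) : Prop :=
  forall v a b, supp g (f v) a -> supp g (f v) b -> a != b -> g a b.

(* Under (KK) the letters of a shortest word representing f v pairwise commute,
   so a vertex a of supp (f v) occurs in it with nonzero exponent sum, and no
   vertex c non-adjacent to a occurs in it.  Sending a to (1,0,0), such a c to
   (0,0,1) and every other generator to 1 defines a homomorphism into the
   integral Heisenberg group; if a lies in the support of p and c in that of q,
   then p and q map to (m,0,0) and (0,0,n) with m n <> 0, which do not commute.
   Since Lambda_1 is irreducible with two vertices, each vertex u has a
   non-neighbour u' <> u.  As f (inl _) and f (inr _) commute, iota_1 u = iota_2 v
   would put the non-adjacent vertices iota_1 u' and iota_2 v into the supports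
   of commuting elements, and so would non-adjacency of iota_1 u and iota_2 v. *)
From mathcomp Require Import all_boot all_algebra.
From mathcomp Require Import ring.
Set Implicit Arguments. Unset Strict Implicit. Unset Printing Implicit Defensive.

Import GRing.Theory.

Section RaagWords.
Variables (W : finType) (g : rel W).
Notation req := (raag_eq g).

Lemma req_catl p w1 w2 : req w1 w2 -> req (p ++ w1) (p ++ w2).
Proof. by move=> h; apply: re_cat => //; apply: re_refl. Qed.

Lemma req_catr q w1 w2 : req w1 w2 -> req (w1 ++ q) (w2 ++ q).
Proof. by move=> h; apply: re_cat => //; apply: re_refl. Qed.

Lemma req_cancel x b w : req [:: (x, b), (x, ~~ b) & w] w.
Proof. exact: (req_catr w (re_free g x b)). Qed.

Lemma req_comm_flipl u s v t :
  req [:: (u, s); (v, t)] [:: (v, t); (u, s)] ->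
  req [:: (u, ~~ s); (v, t)] [:: (v, t); (u, ~~ s)].
Proof.
move=> h.
have pad : req [:: (u, ~~ s); (v, t)] [:: (u, ~~ s); (v, t); (u, s); (u, ~~ s)].
  by rewrite -[X in req X _]cats0; apply: req_catl; apply: re_sym; apply: re_free.
apply: re_trans pad _; apply: (@re_trans _ _ _ [:: (u, ~~ s); (u, s); (v, t); (u, ~~ s)]).
  exact: (req_catl [:: (u, ~~ s)] (req_catr [:: (u, ~~ s)] (re_sym h))).
by have := req_cancel u (~~ s) [:: (v, t); (u, ~~ s)]; rewrite negbK.
Qed.

Lemma req_comm_letters u v s t :
  g u v -> req [:: (u, s); (v, t)] [:: (v, t); (u, s)].
Proof.
move=> huv.
have flipr s' t' : req [:: (u, s'); (v, t')] [:: (v, t'); (u, s')] ->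
    req [:: (u, s'); (v, ~~ t')] [:: (v, ~~ t'); (u, s')].
  by move=> h; apply: re_sym; apply: req_comm_flipl; apply: re_sym.
have TT : req [:: (u, true); (v, true)] [:: (v, true); (u, true)] by apply: re_comm.
by case: s; case: t; do ?[exact: TT | exact: flipr TT | exact: req_comm_flipl TT
  | exact: req_comm_flipl (flipr _ _ TT)].
Qed.

Lemma req_comm_word a s w : {in map fst w, forall y, g a y} ->
  req ((a, s) :: w) (w ++ [:: (a, s)]).
Proof.
elim: w => [|[y t] w IH] adj /=; first exact: re_refl.
apply: (@re_trans _ _ _ [:: (y, t), (a, s) & w]).
  by apply: (req_catr w (@req_comm_letters a y s t _)); apply: adj; rewrite inE eqxx.
by apply: (req_catl [:: (y, t)]); apply: IH => z hz; apply: adj; rewrite inE hz orbT.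
Qed.

Lemma req_filter_letter a w : {in map fst w, forall y, y != a -> g a y} ->
  req w ([seq l <- w | l.1 != a] ++ [seq l <- w | l.1 == a]).
Proof.
elim: w => [|[x s] w IH] adj /=; first exact: re_refl.
have IHw : req w ([seq l <- w | l.1 != a] ++ [seq l <- w | l.1 == a]).
  by apply: IH => y hy; apply: adj; rewrite inE hy orbT.
have [-> | nxa] /= := eqVneq x a; last first.
  exact: (req_catl [:: (x, s)]).
apply: re_trans (req_catl [:: (a, s)] IHw) _.
rewrite catA -[_ :: [seq l <- w | _]]cat1s catA.
apply: req_catr; apply: req_comm_word => y /mapP[l].
rewrite mem_filter => /andP[nla lw] ->; apply: adj nla.
by rewrite inE (map_f fst lw) orbT.
Qed.

Definition letter_sign (b : bool) : int := if b then 1%R else (-1)%R.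

Definition exp_sum (a : W) (w : word W) : int := \sum_(l <- w | l.1 == a) letter_sign l.2.

Definition apow (a : W) (e : int) : word W :=
  match e with Posz n => nseq n (a, true) | Negz n => nseq n.+1 (a, false) end.

Lemma req_apow_cons a s e : req ((a, s) :: apow a e) (apow a (e + letter_sign s)).
Proof.
case: s; case: e => [] [|n] /=; rewrite ?addn0 ?addn1 ?subn1; try exact: re_refl.
- exact: re_free.
- exact: req_cancel.
- exact: (req_cancel a false).
Qed.

Lemma req_apow a w : all (fun l => l.1 == a) w -> req w (apow a (exp_sum a w)).
Proof.
elim: w => [|[x s] w IH] /=; first by rewrite /exp_sum big_nil => _; exact: re_refl.
case/andP => /eqP-> /IH IHw; rewrite /exp_sum big_cons eqxx addrC.
exact: re_trans (req_catl [:: (a, s)] IHw) (req_apow_cons a s _).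
Qed.

Lemma exp_sum_filter_letter a w : exp_sum a [seq l <- w | l.1 == a] = exp_sum a w.
Proof. by rewrite /exp_sum big_filter_cond; apply: eq_bigl => l; rewrite andbb. Qed.

Lemma exp_sum_shortest_neq0 w0 w a : req w0 w ->
  (forall w', req w0 w' -> size w <= size w') -> a \in map fst w ->
  {in map fst w, forall y, y != a -> g a y} -> exp_sum a w != 0%R.
Proof.
move=> w0w wmin aw adj; apply/eqP => exp_sum0.
have shorter : req w [seq l <- w | l.1 != a].
  apply: re_trans (req_filter_letter adj) _; rewrite -[X in req _ X]cats0.
  apply: req_catl; have := req_apow (filter_all (fun l => l.1 == a) w).
  by rewrite exp_sum_filter_letter exp_sum0.
have := wmin _ (re_trans w0w shorter); apply/negP; rewrite -ltnNge size_filter.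
rewrite -(count_predC (fun l => l.1 != a)) -[X in X < _]addn0 ltn_add2l -has_count.
by case/mapP: aw => l lw ->; apply/hasP; exists l => //=; rewrite negbK.
Qed.

End RaagWords.

(* Upper unitriangular integer matrices [[1, x, z], [0, 1, y], [0, 0, 1]]. *)
Record heis := Heis { heis_x : int; heis_z : int; heis_y : int }.

Definition heis_mul (p q : heis) : heis :=
  Heis (heis_x p + heis_x q) (heis_z p + heis_z q + heis_x p * heis_y q)
       (heis_y p + heis_y q).

Definition heis1 : heis := Heis 0 0 0.

Lemma heis_mulA : associative heis_mul.
Proof. by case=> ? ? ? [] ? ? ? [] ? ? ?; rewrite /heis_mul /=; congr Heis; ring. Qed.

Lemma heis_mul1l : left_id heis1 heis_mul.
Proof. by case=> ? ? ?; rewrite /heis_mul /=; congr Heis; ring. Qed.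

Section HeisenbergQuotient.
Variables (W : finType) (g : rel W) (a c : W).

Definition heis_letter (l : W * bool) : heis :=
  if l.1 == a then Heis (letter_sign l.2) 0 0
  else if l.1 == c then Heis 0 0 (letter_sign l.2) else heis1.

Definition heis_eval (w : word W) : heis :=
  foldr (fun l h => heis_mul (heis_letter l) h) heis1 w.

Lemma heis_eval_cat w1 w2 :
  heis_eval (w1 ++ w2) = heis_mul (heis_eval w1) (heis_eval w2).
Proof. by elim: w1 => [|l w IH] /=; rewrite ?heis_mul1l // IH heis_mulA. Qed.

Lemma heis_eval_req w1 w2 : ~~ g a c -> ~~ g c a ->
  raag_eq g w1 w2 -> heis_eval w1 = heis_eval w2.
Proof.
move=> nac nca; elim=> //=.
- by move=> ? ? ? _ -> _ ->.
- by move=> ? ? ? ? _ e1 _ e2; rewrite !heis_eval_cat e1 e2.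
- by move=> x [] /=; rewrite /heis_letter /=; do 2?case: ifP.
- move=> u v uv; rewrite /heis_letter /=.
  have [eua | _] := eqVneq u a; have [eva | _] := eqVneq v a;
  have [euc | _] := eqVneq u c; have [evc | _] := eqVneq v c; try done.
  all: by [move: uv; rewrite eua evc (negbTE nac)
          | move: uv; rewrite euc eva (negbTE nca)].
Qed.

Lemma heis_eval_exp_suml w : c \notin map fst w -> heis_eval w = Heis (exp_sum a w) 0 0.
Proof.
elim: w => [|[x s] w IH] /=; first by rewrite /exp_sum big_nil.
rewrite inE negb_or => /andP[cx /IH->]; rewrite /exp_sum big_cons /heis_letter /=.
case: eqP => _; last by rewrite eq_sym (negbTE cx) heis_mul1l.
by rewrite /heis_mul /=; congr Heis; ring.
Qed.

Lemma heis_eval_exp_sumr w : a \notin map fst w -> heis_eval w = Heis 0 0 (exp_sum c w).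
Proof.
elim: w => [|[x s] w IH] /=; first by rewrite /exp_sum big_nil.
rewrite inE negb_or => /andP[ax /IH->]; rewrite /exp_sum big_cons /heis_letter /=.
rewrite eq_sym (negbTE ax); case: eqP => _; last by rewrite heis_mul1l.
by rewrite /heis_mul /=; congr Heis; ring.
Qed.

End HeisenbergQuotient.

Section CliqueSupports.
Variables (W : finType) (g : rel W).

Definition supp_clique (p : word W) : Prop :=
  forall a b, supp g p a -> supp g p b -> a != b -> g a b.

Lemma supp_clique_shortest p a c : supp_clique p -> supp g p a -> a != c -> ~~ g a c ->
  exists w, [/\ raag_eq g p w, exp_sum a w != 0%R & c \notin map fst w].
Proof.
move=> clique [w [pw wmin aw]] ac nac; have suppw y : y \in map fst w -> supp g p y.
  by move=> yw; exists w.
exists w; split => //.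
  apply: (exp_sum_shortest_neq0 pw wmin aw) => y yw ya.
  by apply: clique (suppw a aw) (suppw y yw) _; rewrite eq_sym.
by apply: contra nac => cw; apply: clique (suppw a aw) (suppw c cw) ac.
Qed.

Lemma supp_clique_noncomm p q a c : symmetric g ->
  supp_clique p -> supp_clique q -> a != c -> ~~ g a c ->
  supp g p a -> supp g q c -> ~ raag_eq g (p ++ q) (q ++ p).
Proof.
move=> gsym clp clq ac nac pa qc pq; have nca : ~~ g c a by rewrite gsym.
have [w1 [pw1 e1 cw1]] := supp_clique_shortest clp pa ac nac.
have ca : c != a by rewrite eq_sym.
have [w2 [qw2 e2 aw2]] := supp_clique_shortest clq qc ca nca.
have := heis_eval_req nac nca pq; rewrite !heis_eval_cat.
rewrite (heis_eval_req nac nca pw1) (heis_eval_req nac nca qw2).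
rewrite heis_eval_exp_suml // heis_eval_exp_sumr // => /(congr1 heis_z) /= /eqP.
by rewrite !add0r mul0r mulf_eq0 (negbTE e1) (negbTE e2).
Qed.

End CliqueSupports.

Lemma irreducible_non_neighbour (V : finType) (e : rel V) :
  irreducible_graph e -> 1 < #|V| -> forall u, exists2 u', u' != u & ~~ e u u'.
Proof.
move=> irr V_gt1 u; case: (pickP (fun u' => (u' != u) && ~~ e u u')) => [u' /andP[]|none].
  by exists u'.
case: irr; exists [set u]; split.
- by apply/set0Pn; exists u; rewrite inE.
- by rewrite -card_gt0 cardsC1 -subn1 subn_gt0.
- by move=> _ b /set1P-> /set1P/eqP bu; have := none b; rewrite bu => /negbFE.
Qed.

Definition join_map (V1 V2 W : Type) (i1 : V1 -> W) (i2 : V2 -> W) (x : V1 + V2) : W :=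
  match x with inl a => i1 a | inr b => i2 b end.

Lemma full_embedding_join (V1 V2 W : finType) (e1 : rel V1) (e2 : rel V2) (g : rel W)
    (i1 : V1 -> W) (i2 : V2 -> W) :
  simple_graph g -> full_embedding e1 g i1 -> full_embedding e2 g i2 ->
  (forall u v, g (i1 u) (i2 v)) -> full_embedding (joinrel e1 e2) g (join_map i1 i2).
Proof.
move=> [gsym girr] [inj1 full1] [inj2 full2] cross; split.
  case=> [u|v] [u'|v']; rewrite /join_map => eq_uv;
    rewrite ?(inj1 _ _ eq_uv) ?(inj2 _ _ eq_uv) //.
    by have := cross u v'; rewrite eq_uv girr.
  by have := cross u' v; rewrite eq_uv girr.
by case=> [u|v] [u'|v']; rewrite /join_map /= ?full1 ?full2 ?cross // gsym cross.
Qed.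

Section JoinImages.
Variables (V1 V2 W : finType) (e1 : rel V1) (e2 : rel V2) (g : rel W).
Variables (f : V1 + V2 -> word W) (i1 : V1 -> W) (i2 : V2 -> W).
Hypotheses (gsym : symmetric g) (f_hom : raag_hom (joinrel e1 e2) g f) (f_KK : KK g f).
Hypotheses (i1_full : full_embedding e1 g i1)
  (i1_supp : forall v, exists u, supp g (f (inl u)) (i1 v))
  (i2_supp : forall v, exists u, supp g (f (inr u)) (i2 v)).
Hypothesis e1_non_neighbour : forall u, exists2 u', u' != u & ~~ e1 u u'.

Lemma join_supp_adjacent x y a c :
  supp g (f (inl x)) a -> supp g (f (inr y)) c -> a != c -> g a c.
Proof.
move=> xa yc ac; apply/negP => /negP nac.
apply: (supp_clique_noncomm gsym (@f_KK (inl x)) (@f_KK (inr y)) ac nac xa yc).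
exact: f_hom.
Qed.

Lemma join_images_adjacent u v : g (i1 u) (i2 v).
Proof.
have [[x xu] [y yv]] := (i1_supp u, i2_supp v); case: i1_full => i1_inj i1_edge.
have [u' u'u nuu'] := e1_non_neighbour u; have [x' xu'] := i1_supp u'.
apply: (join_supp_adjacent xu yv); apply: contra nuu' => /eqP uv.
have u'v : i1 u' != i2 v by rewrite -uv (inj_eq i1_inj).
by have := join_supp_adjacent xu' yv u'v; rewrite -uv gsym i1_edge.
Qed.

End JoinImages.

Theorem lemma3p3 (V1 V2 W : finType) (e1 : rel V1) (e2 : rel V2) (g : rel W)
  (f : V1 + V2 -> word W) (i1 : V1 -> W) (i2 : V2 -> W) :
  simple_graph e1 -> simple_graph e2 -> simple_graph g ->
  irreducible_graph e1 -> 2 <= #|V1| ->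
  raag_hom (joinrel e1 e2) g f ->
  raag_hom_inj (joinrel e1 e2) g f ->
  KK g f ->
  full_embedding e1 g i1 ->
  (forall v, exists u, supp g (f (inl u)) (i1 v)) ->
  full_embedding e2 g i2 ->
  (forall v, exists u, supp g (f (inr u)) (i2 v)) ->
  full_embedding (joinrel e1 e2) g
      (fun x => match x with inl a => i1 a | inr b => i2 b end) /\
  (forall x, exists y, supp g (f y)
      (match x with inl a => i1 a | inr b => i2 b end)).
Proof.
move=> _ _ g_simple irr V1_gt1 f_hom _ f_KK i1_full i1_supp i2_full i2_supp.
have cross u v : g (i1 u) (i2 v).
  have [gsym _] := g_simple; have non_neighbour := irreducible_non_neighbour irr V1_gt1.
  exact: join_images_adjacent gsym f_hom f_KK i1_full i1_supp i2_supp non_neighbour u v.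
split; first exact: full_embedding_join g_simple i1_full i2_full cross.
by case=> [u|v]; [have [x] := i1_supp u; exists (inl x)
                 | have [y] := i2_supp v; exists (inr y)].
Qed.
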